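(* Let $n=ld$ with positive integers $l,d$, and let $k\geq 2$ be an integer. Let $A\in\mathbb{R}^{m\times n}$ be partitioned into blocks $A=[A[1],A[2],\dots,A[l]]$ with $A[i]\in\mathbb{R}^{m\times d}$, where each $A[i]$ is orthonormal, i.e. $(A[i])^TA[i]=I_d$. Let $\mu_B=\max_{1\leq i<j\leq l}\|(A[i])^TA[j]\|_2$ (spectral norm) and suppose $$\mu_B<\frac{1}{(2k-1)d}.$$ Let $\bm{x}\in\mathbb{R}^n$ be arbitrary, let $\epsilon\geq 0$, let $\bm{z}\in\mathbb{R}^m$ with $\|\bm{z}\|_2\leq\epsilon$, and set $\bm{b}=A\bm{x}+\bm{z}$. Let $\lambda>0$ and let $\bm{x}^{\sharp}$ be an optimal solution of $$\min_{\bm{y}\in\mathbb{R}^n}\ \|\bm{y}\|_{2,1}+\frac{1}{2\lambda}\|\bm{b}-A\bm{y}\|_2^2 .$$ Define $$\beta_1=\frac{\sqrt{1+(k-1)d\mu_B}}{1-(k-1)d\mu_B},\qquad \beta_2=\frac{\sqrt{k}\,d\mu_B}{1-(k-1)d\mu_B},$$ $$f_k(t)=kt^2+3\sqrt{k}\,t+3,\qquad g_k(t)=2kt^2+4\sqrt{k}\,t+1 .$$ Then $$\|A(\bm{x}^{\sharp}-\bm{x})\|_2\leq \frac{2\lambda}{\sqrt{k}\beta_1\lambda+\epsilon}\,\|\bm{x}-\bm{x}_{\{k\}}\|_{2,1}+2(\sqrt{k}\beta_1\lambda+\epsilon),$$ and $$\|\bm{x}^{\sharp}-\bm{x}\|_2\leq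 \frac{2\sqrt{k}\beta_1 f_k(\beta_2)\lambda+2g_k(\beta_2)\epsilon}{\sqrt{k}(1-\sqrt{k}\beta_2)(\sqrt{k}\beta_1\lambda+\epsilon)}\,\|\bm{x}-\bm{x}_{\{k\}}\|_{2,1}+\frac{\big(\sqrt{k}\beta_1(5+2\sqrt{k}\beta_2)\lambda+g_k(\beta_2)\epsilon\big)(\sqrt{k}\beta_1\lambda+\epsilon)}{\sqrt{k}(1-\sqrt{k}\beta_2)\lambda}.$$
   Context: Any $\bm{y}\in\mathbb{R}^n$ is partitioned into $l$ consecutive blocks $\bm{y}[i]=(\bm{y}_{(i-1)d+1},\dots,\bm{y}_{id})^T\in\mathbb{R}^d$, $i=1,\dots,l$, matching the column blocks $A[i]$ (columns $(i-1)d+1,\dots,id$ of $A$). $\|\bm{y}\|_{2,1}=\sum_{i=1}^l\|\bm{y}[i]\|_2$, and $\|\bm{y}\|_{2,0}$ is the number of indices $i$ with $\bm{y}[i]\neq 0$. $\bm{x}_{\{k\}}$ denotes a best $k$-block approximation of $\bm{x}$: $\bm{x}_{\{k\}}\in\arg\min_{\|\bm{y}\|_{2,0}\leq k}\|\bm{y}-\bm{x}\|_2$. *)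

From HB Require Import structures.
From mathcomp Require Import all_boot all_order all_algebra.
From mathcomp Require Import boolp classical_sets reals.
Set Implicit Arguments. Unset Strict Implicit. Unset Printing Implicit Defensive.
Import Order.TTheory GRing.Theory Num.Theory.
Local Open Scope ring_scope.
Local Open Scope classical_set_scope.

Section Defs.
Variable R : realType.

Definition norm2 (p : nat) (v : 'cV[R]_p) : R :=
  Num.sqrt (\sum_(i < p) v i 0 ^+ 2).

Definition specnorm (p q : nat) (M : 'M[R]_(p, q)) : R :=
  sup [set norm2 (M *m v) | v in [set v : 'cV[R]_q | norm2 v <= 1]].

(* Block structure: index (i, j) with i : 'I_l, j : 'I_d is coordinate i*d + j
   (mxvec_index i j has value i * d + j). *)
Definition blkA (m l d : nat) (A : 'M[R]_(m, l * d)) (i : 'I_l) : 'M[R]_(m, d) :=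
  \matrix_(r < m, c < d) A r (mxvec_index i c).

Definition blk (l d : nat) (y : 'cV[R]_(l * d)) (i : 'I_l) : 'cV[R]_d :=
  \col_(c < d) y (mxvec_index i c) 0.

Definition norm21 (l d : nat) (y : 'cV[R]_(l * d)) : R :=
  \sum_(i < l) norm2 (blk y i).

Definition norm20 (l d : nat) (y : 'cV[R]_(l * d)) : nat :=
  #|[set i : 'I_l | blk y i != 0]|.

(* block coherence mu_B = max_{i<j} ||A[i]^T A[j]||_2 (0 if l = 1) *)
Definition muB (m l d : nat) (A : 'M[R]_(m, l * d)) : R :=
  \big[Num.max/0]_(i < l) \big[Num.max/0]_(j < l | (i < j)%N)
     specnorm ((blkA A i)^T *m blkA A j).

Definition best_k_block_approx (l d k : nat) (x xk : 'cV[R]_(l * d)) : Prop :=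
  (norm20 xk <= k)%N /\
  forall y : 'cV[R]_(l * d), (norm20 y <= k)%N -> norm2 (xk - x) <= norm2 (y - x).

Definition lasso_obj (m l d : nat) (lam : R) (A : 'M[R]_(m, l * d)) (b : 'cV[R]_m)
  (y : 'cV[R]_(l * d)) : R :=
  norm21 y + (2 * lam)^-1 * norm2 (b - A *m y) ^+ 2.

End Defs.

From HB Require Import structures.
From mathcomp Require Import all_boot all_order all_algebra.
From mathcomp Require Import boolp classical_sets reals.
From mathcomp Require Import ring lra zify.
Import Order.TTheory GRing.Theory Num.Theory.
Local Open Scope ring_scope.

Set Implicit Arguments.
Unset Strict Implicit.
Unset Printing Implicit Defensive.

(* Block coherence controls A on block-sparse vectors: for y with at most k
   nonzero blocks, |‖Ay‖² - ‖y‖²| <= (k-1) mu_B ‖y‖², and for y, w with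
   disjoint block supports, |<Ay, Aw>| <= mu_B ‖y‖_{2,1} ‖w‖_{2,1}.  Writing
   ‖A h_S‖² = <A h_S, A h> - <A h_S, A h_{S^c}>, this gives the robust null
   space property ‖h_S‖ <= beta1 ‖Ah‖ + beta2 ‖h_{S^c}‖_{2,1} for |S| <= k.
   Optimality of x# along single blocks and along x# itself yields
   ‖(A^T (b - A x#))[i]‖ <= lambda and lambda ‖x#‖_{2,1} <= <x#, A^T (b - A x#)>,
   hence, for h = x# - x, ‖Ah‖² <= eps ‖Ah‖ + lambda (‖x‖_{2,1} - ‖x#‖_{2,1}).
   With T the block support of x_{k}, the cone inequality and the null space
   property turn this into the quadratic inequality
   ‖Ah‖² <= c ‖Ah‖ - lambda (1 - sqrt k beta2) ‖h_{T^c}‖_{2,1} + 2 lambda sigma,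
   c = sqrt k beta1 lambda + eps, which bounds both ‖Ah‖ and ‖h_{T^c}‖_{2,1}.
   For ‖h‖, split h_{T^c} into its blocks of norm above ‖h_{T^c}‖_{2,1} / k
   (at most k of them) and a tail of norm at most ‖h_{T^c}‖_{2,1} / sqrt k. *)

Lemma ler_div_of_sqr_le (R : realFieldType) (e x b : R) :
  0 < e -> 0 <= b -> e * x ^+ 2 <= x * b -> x <= b / e.
Proof.
move=> e0 b0 le_xb; rewrite ler_pdivlMr // leNgt; apply/negP => lt_bx.
have x0 : 0 < x by rewrite -(pmulr_lgt0 _ e0); apply: le_lt_trans b0 lt_bx.
have : x * b < x * (x * e) by rewrite ltr_pM2l.
rewrite expr2 in le_xb; lra.
Qed.

Lemma ler_of_le_add_small_mul (R : realFieldType) (a b c : R) :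
  (forall t, 0 < t <= 1 -> a <= b + t * c) -> a <= b.
Proof.
move=> small; apply/ler_addgt0Pr => e e0.
have ec0 : 0 < e + `|c| by rewrite ltr_wpDr.
set t := e / (e + `|c|).
have t0 : 0 < t by rewrite divr_gt0.
have t1 : t <= 1 by rewrite ler_pdivrMr // mul1r lerDl.
apply: le_trans (small t _) _; first by rewrite t0 t1.
rewrite lerD2l; apply: le_trans (ler_wpM2l (ltW t0) (ler_norm c)) _.
by rewrite /t mulrAC ler_pdivrMr // ler_pM2l // lerDr ltW.
Qed.

Lemma quadratic_bounds (R : realFieldType) (s c q e : R) :
  0 < c -> 0 <= q -> 0 <= e -> s ^+ 2 <= c * s - q + e ->
  c * s <= c ^+ 2 + e /\ q <= c ^+ 2 / 4 + e.
Proof.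
move=> c0 q0 e0 quad; split; last first.
  by have := sqr_ge0 (s - c / 2); rewrite !expr2 in quad *; lra.
case: (lerP s c) => [le_sc|lt_cs].
  by have := ler_wpM2l (ltW c0) le_sc; rewrite expr2; lra.
have : c * (s - c) <= s * (s - c) by rewrite ler_pM2r ?subr_gt0 // ltW.
rewrite expr2 in quad *; lra.
Qed.

Section Euclidean.
Variable R : realType.
Implicit Types (p q : nat).

Definition dot p (u v : 'cV[R]_p) : R := \sum_i u i 0 * v i 0.

Lemma dotC p (u v : 'cV[R]_p) : dot u v = dot v u.
Proof. by apply: eq_bigr => i _; rewrite mulrC. Qed.

Lemma dotDl p (u v w : 'cV[R]_p) : dot (u + v) w = dot u w + dot v w.
Proof. by rewrite /dot -big_split; apply: eq_bigr => i _; rewrite mxE mulrDl. Qed.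

Lemma dotZl p a (u v : 'cV[R]_p) : dot (a *: u) v = a * dot u v.
Proof. by rewrite /dot mulr_sumr; apply: eq_bigr => i _; rewrite mxE mulrA. Qed.

Lemma dotNl p (u v : 'cV[R]_p) : dot (- u) v = - dot u v.
Proof. by rewrite -scaleN1r dotZl mulN1r. Qed.

Lemma dotBl p (u v w : 'cV[R]_p) : dot (u - v) w = dot u w - dot v w.
Proof. by rewrite dotDl dotNl. Qed.

Lemma dotDr p (u v w : 'cV[R]_p) : dot u (v + w) = dot u v + dot u w.
Proof. by rewrite dotC dotDl !(dotC u). Qed.

Lemma dotZr p a (u v : 'cV[R]_p) : dot u (a *: v) = a * dot u v.
Proof. by rewrite dotC dotZl dotC. Qed.

Lemma dotBr p (u v w : 'cV[R]_p) : dot u (v - w) = dot u v - dot u w.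
Proof. by rewrite dotC dotBl !(dotC u). Qed.

Lemma dot0r p (u : 'cV[R]_p) : dot u 0 = 0.
Proof. by rewrite /dot big1 // => i _; rewrite mxE mulr0. Qed.

Lemma dot_suml p (I : finType) (P : pred I) (F : I -> 'cV[R]_p) v :
  dot (\sum_(i | P i) F i) v = \sum_(i | P i) dot (F i) v.
Proof.
rewrite /dot exchange_big; apply: eq_bigr => j _.
by rewrite summxE mulr_suml.
Qed.

Lemma dot_sumr p (I : finType) (P : pred I) (F : I -> 'cV[R]_p) u :
  dot u (\sum_(i | P i) F i) = \sum_(i | P i) dot u (F i).
Proof. by rewrite dotC dot_suml; apply: eq_bigr => i _; rewrite dotC. Qed.

Lemma dot_mulmxl p q (M : 'M[R]_(p, q)) u v : dot (M *m u) v = dot u (M^T *m v).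
Proof.
rewrite /dot; under eq_bigr do rewrite mxE mulr_suml.
under [RHS]eq_bigr do rewrite mxE mulr_sumr.
rewrite exchange_big; apply: eq_bigr => j _; apply: eq_bigr => i _.
by rewrite mxE mulrCA mulrA.
Qed.

Lemma dotvv_ge0 p (v : 'cV[R]_p) : 0 <= dot v v.
Proof. by apply: sumr_ge0 => i _; rewrite -expr2 sqr_ge0. Qed.

Lemma dotvv_eq0 p (v : 'cV[R]_p) : dot v v = 0 -> v = 0.
Proof.
move=> /psumr_eq0P vv0; apply/colP => i; rewrite mxE.
by apply/eqP; rewrite -sqrf_eq0 expr2 vv0 // => j _; rewrite -expr2 sqr_ge0.
Qed.

Lemma norm2_ge0 p (v : 'cV[R]_p) : 0 <= norm2 v.
Proof. exact: sqrtr_ge0. Qed.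

Lemma norm2_sqr p (v : 'cV[R]_p) : norm2 v ^+ 2 = dot v v.
Proof.
rewrite sqr_sqrtr; last by apply: sumr_ge0 => i _; rewrite sqr_ge0.
by apply: eq_bigr => i _; rewrite expr2.
Qed.

Lemma norm2E p (v : 'cV[R]_p) : norm2 v = Num.sqrt (dot v v).
Proof. by rewrite -norm2_sqr sqrtr_sqr ger0_norm ?norm2_ge0. Qed.

Lemma CauchySchwarz p (u v : 'cV[R]_p) : dot u v ^+ 2 <= dot u u * dot v v.
Proof.
have [/dotvv_eq0 ->|v0] := eqVneq (dot v v) 0.
  by rewrite !dot0r expr0n /= mulr0.
have vpos : 0 < dot v v by rewrite lt_def v0 dotvv_ge0.
have := dotvv_ge0 (dot v v *: u - dot u v *: v).
rewrite !(dotBl, dotBr, dotZl, dotZr) (dotC v u) => h.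
by rewrite -subr_ge0 -(pmulr_rge0 _ vpos); nra.
Qed.

Lemma ler_dot_norm2 p (u v : 'cV[R]_p) : `|dot u v| <= norm2 u * norm2 v.
Proof.
rewrite -ler_sqr ?nnegrE ?mulr_ge0 ?norm2_ge0 //.
by rewrite -normrX ger0_norm ?sqr_ge0 // exprMn !norm2_sqr CauchySchwarz.
Qed.

Lemma dot_le_norm2 p (u v : 'cV[R]_p) : dot u v <= norm2 u * norm2 v.
Proof. exact: le_trans (ler_norm _) (ler_dot_norm2 _ _). Qed.

Lemma norm2D p (u v : 'cV[R]_p) : norm2 (u + v) <= norm2 u + norm2 v.
Proof.
rewrite -ler_sqr ?nnegrE ?addr_ge0 ?norm2_ge0 //.
have := dot_le_norm2 u v; rewrite sqrrD !norm2_sqr !(dotDl, dotDr) (dotC v u).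
lra.
Qed.

Lemma norm2Z p a (v : 'cV[R]_p) : norm2 (a *: v) = `|a| * norm2 v.
Proof.
by rewrite !norm2E dotZl dotZr mulrA -expr2 sqrtrM ?sqr_ge0 // sqrtr_sqr.
Qed.

Lemma norm2N p (v : 'cV[R]_p) : norm2 (- v) = norm2 v.
Proof. by rewrite -scaleN1r norm2Z normrN1 mul1r. Qed.

Lemma norm2_0 p : norm2 (0 : 'cV[R]_p) = 0.
Proof. by rewrite norm2E dot0r sqrtr0. Qed.

Lemma norm2_sqrD p (u v : 'cV[R]_p) :
  norm2 (u + v) ^+ 2 = norm2 u ^+ 2 + 2 * dot u v + norm2 v ^+ 2.
Proof. by rewrite !norm2_sqr !(dotDl, dotDr) (dotC v u); ring. Qed.

Lemma sum_sqr_le_card p (S : {set 'I_p}) (f : 'I_p -> R) :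
  (\sum_(i in S) f i) ^+ 2 <= #|S|%:R * \sum_(i in S) f i ^+ 2.
Proof.
pose u : 'cV[R]_p := \col_i (i \in S)%:R.
pose v : 'cV[R]_p := \col_i ((i \in S)%:R * f i).
have sumE (F : 'I_p -> R) : \sum_(i in S) F i = \sum_i (i \in S)%:R * F i.
  by rewrite big_mkcond; apply: eq_bigr => i _; case: (_ \in S); rewrite ?mul1r ?mul0r.
have := CauchySchwarz u v.
suff [-> -> ->] : [/\ dot u v = \sum_(i in S) f i, dot u u = #|S|%:R
                    & dot v v = \sum_(i in S) f i ^+ 2] by [].
rewrite -sum1_card natr_sum !sumE /dot.
by split; apply: eq_bigr => i _; rewrite !mxE; case: (_ \in S);
  rewrite ?mul1r ?mul0r ?expr2.
Qed.

End Euclidean.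

Section Blocks.
Variables (R : realType) (l d : nat).
Implicit Types (u v y : 'cV[R]_(l * d)) (S : {set 'I_l}).

Lemma blkP u v : (forall i, blk u i = blk v i) -> u = v.
Proof.
move=> uv; apply/colP => p; case/mxvec_indexP: p => i c.
by have /colP/(_ c) := uv i; rewrite !mxE.
Qed.

Lemma blkD u v i : blk (u + v) i = blk u i + blk v i.
Proof. by apply/colP => c; rewrite !mxE. Qed.

Lemma blkZ a u i : blk (a *: u) i = a *: blk u i.
Proof. by apply/colP => c; rewrite !mxE. Qed.

Lemma blkB u v i : blk (u - v) i = blk u i - blk v i.
Proof. by rewrite blkD -scaleN1r blkZ scaleN1r. Qed.

Lemma sum_blk (F : 'I_(l * d) -> R) :
  \sum_p F p = \sum_i \sum_c F (mxvec_index i c).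
Proof.
rewrite (reindex _ (curry_mxvec_bij _ _)) /= pair_bigA.
by apply: eq_bigr => -[i c].
Qed.

Lemma dot_blk u v : dot u v = \sum_i dot (blk u i) (blk v i).
Proof.
rewrite /dot sum_blk; apply: eq_bigr => i _; apply: eq_bigr => c _.
by rewrite !mxE.
Qed.

Lemma norm2_blk y : norm2 y ^+ 2 = \sum_i norm2 (blk y i) ^+ 2.
Proof. by rewrite norm2_sqr dot_blk; apply: eq_bigr => i _; rewrite norm2_sqr. Qed.

Lemma mul_blk m (A : 'M[R]_(m, l * d)) y : A *m y = \sum_i blkA A i *m blk y i.
Proof.
apply/colP => r; rewrite mxE summxE sum_blk; apply: eq_bigr => i _.
by rewrite mxE; apply: eq_bigr => c _; rewrite !mxE.
Qed.

Lemma norm21_ge0 y : 0 <= norm21 y.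
Proof. by apply: sumr_ge0 => i _; apply: norm2_ge0. Qed.

Lemma norm21D u v : norm21 (u + v) <= norm21 u + norm21 v.
Proof. by rewrite /norm21 -big_split; apply: ler_sum => i _; rewrite blkD norm2D. Qed.

Lemma norm21Z a u : norm21 (a *: u) = `|a| * norm21 u.
Proof. by rewrite /norm21 mulr_sumr; apply: eq_bigr => i _; rewrite blkZ norm2Z. Qed.

Definition bsupp y := [set i | blk y i != 0].

Definition restrict S y : 'cV[R]_(l * d) :=
  (mxvec (\matrix_(i, c) if i \in S then y (mxvec_index i c) 0 else 0))^T.

Lemma blk_restrict S y i : blk (restrict S y) i = if i \in S then blk y i else 0.
Proof. by apply/colP => c; rewrite !mxE mxvecE mxE; case: ifP; rewrite ?mxE. Qed.

Lemma restrictI S S' y : restrict S (restrict S' y) = restrict (S :&: S') y.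
Proof.
apply: blkP => i; rewrite !blk_restrict inE.
by case: (i \in S); case: (i \in S').
Qed.

Lemma restrict_split S y : restrict S y + restrict (~: S) y = y.
Proof.
by apply: blkP => i; rewrite blkD !blk_restrict inE; case: (i \in S); rewrite ?addr0 ?add0r.
Qed.

Lemma sum_restrict S y (F : 'cV[R]_d -> R) : F 0 = 0 ->
  \sum_i F (blk (restrict S y) i) = \sum_(i in S) F (blk y i).
Proof.
move=> F0; rewrite [RHS]big_mkcond; apply: eq_bigr => i _.
by rewrite blk_restrict; case: (i \in S).
Qed.

Lemma norm21_restrict S y : norm21 (restrict S y) = \sum_(i in S) norm2 (blk y i).
Proof. exact/sum_restrict/norm2_0. Qed.

Lemma norm2_restrict S y :
  norm2 (restrict S y) ^+ 2 = \sum_(i in S) norm2 (blk y i) ^+ 2.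
Proof.
by rewrite norm2_blk (@sum_restrict _ _ (fun w => norm2 w ^+ 2)) // norm2_0 expr0n.
Qed.

Lemma dot_restrict S u v :
  dot (restrict S u) v = \sum_(i in S) dot (blk u i) (blk v i).
Proof.
rewrite dot_blk [RHS]big_mkcond; apply: eq_bigr => i _.
by rewrite blk_restrict; case: (i \in S); rewrite // dotC dot0r.
Qed.

Lemma norm21_split S y : norm21 y = norm21 (restrict S y) + norm21 (restrict (~: S) y).
Proof.
rewrite !norm21_restrict /norm21 (bigID (mem S)) /=.
by congr (_ + _); apply: eq_bigl => i; rewrite inE.
Qed.

Lemma norm21_restrict_le S y : norm21 (restrict S y) <= norm21 y.
Proof. by rewrite [leRHS](norm21_split S) lerDl norm21_ge0. Qed.

Lemma norm20E y : norm20 y = #|bsupp y|.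
Proof. by apply: eq_card => i; rewrite inE unfold_in /in_set asboolb. Qed.

Lemma norm20_restrict S y : (norm20 (restrict S y) <= #|S|)%N.
Proof.
rewrite norm20E; apply/subset_leq_card/fintype.subsetP => i; rewrite !inE blk_restrict.
by case: ifP; rewrite ?eqxx.
Qed.

Lemma norm21_le_norm2 k y : (norm20 y <= k)%N -> norm21 y <= Num.sqrt k%:R * norm2 y.
Proof.
move=> supp_k.
have supp_sum : norm21 y = \sum_(i in bsupp y) norm2 (blk y i).
  rewrite /norm21 [LHS](bigID (mem (bsupp y))) /= [X in _ + X]big1 ?addr0 //.
  by move=> i; rewrite inE negbK => /eqP ->; rewrite norm2_0.
rewrite -ler_sqr ?nnegrE ?mulr_ge0 ?norm21_ge0 ?norm2_ge0 ?sqrtr_ge0 //.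
rewrite exprMn sqr_sqrtr // norm2_blk supp_sum.
apply: le_trans (sum_sqr_le_card _ _) _; apply: ler_pM.
- exact: ler0n.
- by apply: sumr_ge0 => i _; rewrite sqr_ge0.
- by rewrite ler_nat -norm20E.
- by rewrite [leRHS](bigID (mem (bsupp y))) lerDl sumr_ge0 // => i _; rewrite sqr_ge0.
Qed.

Lemma norm2_blk_le_norm21 y i : norm2 (blk y i) <= norm21 y.
Proof.
by rewrite /norm21 (bigD1 i) //= lerDl sumr_ge0 // => j _; apply: norm2_ge0.
Qed.

(* S collects the blocks of norm above norm21 y / k. *)
Lemma exists_small_tail k y : (0 < k)%N ->
  exists2 S : {set 'I_l}, (#|S| <= k)%N &
    norm2 (restrict (~: S) y) <= norm21 y / Num.sqrt k%:R.
Proof.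
move=> k0; set Q := norm21 y; set thr := Q / k%:R.
have kpos : 0 < k%:R :> R by rewrite ltr0n.
have thr0 : 0 <= thr by rewrite divr_ge0 ?norm21_ge0 ?ler0n.
pose S := [set i | thr < norm2 (blk y i)].
exists S.
  rewrite leqNgt; apply/negP => large.
  have [i0] : exists i0, i0 \in S.
    by apply/set0Pn; rewrite -card_gt0 (leq_ltn_trans _ large).
  rewrite inE => thr_lt.
  have Qpos : 0 < Q.
    exact: le_lt_trans thr0 (lt_le_trans thr_lt (norm2_blk_le_norm21 y i0)).
  have : #|S|%:R * thr <= Q.
    rewrite mulr_natl -sumr_const (le_trans _ (norm21_restrict_le S y)) //.
    by rewrite norm21_restrict; apply: ler_sum => i; rewrite inE => /ltW.
  rewrite /thr mulrA ler_pdivrMr // [leRHS]mulrC ler_pM2r // ler_nat.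
  by rewrite leqNgt large.
rewrite -ler_sqr ?nnegrE ?norm2_ge0 ?divr_ge0 ?norm21_ge0 ?sqrtr_ge0 //.
rewrite norm2_restrict expr_div_n sqr_sqrtr ?ler0n //.
apply: (@le_trans _ _ (\sum_(i in ~: S) thr * norm2 (blk y i))).
  apply: ler_sum => i; rewrite !inE -leNgt => small.
  by rewrite expr2 ler_wpM2r ?norm2_ge0.
rewrite -mulr_sumr -norm21_restrict expr2 [leRHS]mulrAC.
by apply: ler_wpM2l => //; apply: norm21_restrict_le.
Qed.

Lemma norm21_cone x xs xk (T := bsupp xk) :
  norm21 x - norm21 xs <=
    norm21 (restrict T (xs - x)) - norm21 (restrict (~: T) (xs - x)) + 2 * norm21 (x - xk).
Proof.
have tri (a c : 'cV[R]_d) :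
    norm2 a <= norm2 c + norm2 (c - a) /\ norm2 (c - a) <= norm2 c + norm2 a.
  split; last by rewrite -[norm2 a]norm2N norm2D.
  by have := norm2D c (a - c); rewrite addrC subrK -opprB norm2N.
have offT : norm21 (restrict (~: T) x) <= norm21 (x - xk).
  apply: le_trans (norm21_restrict_le (~: T) _); rewrite !norm21_restrict le_eqVlt.
  apply/orP; left; apply/eqP/eq_bigr => i; rewrite !inE negbK blkB => /eqP ->.
  by rewrite subr0.
rewrite (norm21_split T x) (norm21_split T xs) !norm21_restrict.
suff : \sum_(i in T) (norm2 (blk x i) - norm2 (blk xs i))
       + \sum_(i in ~: T) (norm2 (blk x i) - norm2 (blk xs i))
       <= \sum_(i in T) norm2 (blk (xs - x) i)
          + \sum_(i in ~: T) (2 * norm2 (blk x i) - norm2 (blk (xs - x) i)).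
  by move: offT; rewrite !sumrB -mulr_sumr norm21_restrict; lra.
apply: lerD; apply: ler_sum => i _; have [t1 t2] := tri (blk x i) (blk xs i);
  rewrite blkB; lra.
Qed.

End Blocks.

Section SpectralNorm.
Variable R : realType.
Local Open Scope classical_set_scope.

Lemma specnorm_bounded p q (M : 'M[R]_(p, q)) :
  has_ubound [set norm2 (M *m v) | v in [set v : 'cV[R]_q | norm2 v <= 1]].
Proof.
exists (Num.sqrt (\sum_r norm2 (row r M)^T ^+ 2)) => _ [v /= v1 <-].
apply: ler_wsqrtr; apply: ler_sum => r _.
have -> : (M *m v) r 0 = dot (row r M)^T v.
  by rewrite mxE; apply: eq_bigr => c _; rewrite !mxE.
apply: le_trans (CauchySchwarz _ _) _; rewrite -!norm2_sqr.
by rewrite ler_piMr ?sqr_ge0 // expr_le1 ?norm2_ge0.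
Qed.

Lemma norm2_mulmx_le p q (M : 'M[R]_(p, q)) v : norm2 (M *m v) <= specnorm M * norm2 v.
Proof.
have [v0|vpos] := eqVneq (norm2 v) 0.
  have -> : v = 0 by apply: dotvv_eq0; rewrite -norm2_sqr v0 expr0n.
  by rewrite mulmx0 !norm2_0 mulr0.
have {}vpos : 0 < norm2 v by rewrite lt_def vpos norm2_ge0.
have unit : norm2 ((norm2 v)^-1 *: v) <= 1.
  by rewrite norm2Z ger0_norm ?invr_ge0 ?norm2_ge0 // mulVf ?gt_eqF.
have := ub_le_sup (specnorm_bounded M) (ex_intro2 _ _ ((norm2 v)^-1 *: v) unit erefl).
rewrite -scalemxAr norm2Z ger0_norm ?invr_ge0 ?norm2_ge0 // -/(specnorm M).
by rewrite mulrC ler_pdivrMr.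
Qed.

End SpectralNorm.

Definition robust_nsp (R : realType) (m l d k : nat) (A : 'M[R]_(m, l * d))
    (beta1 beta2 : R) :=
  forall (h : 'cV[R]_(l * d)) (S : {set 'I_l}), (#|S| <= k)%N ->
    norm2 (restrict S h) <= beta1 * norm2 (A *m h) + beta2 * norm21 (restrict (~: S) h).

Section Coherence.
Variables (R : realType) (m l d : nat) (A : 'M[R]_(m, l * d)).
Hypothesis orthonormal_blocks : forall i, (blkA A i)^T *m blkA A i = 1%:M.

Lemma muB_ge0 : 0 <= muB A.
Proof. by rewrite /muB; elim/big_rec: _ => // i x _ x0; rewrite le_max x0 orbT. Qed.

Lemma specnorm_le_muB (i j : 'I_l) : (i < j)%N ->
  specnorm ((blkA A i)^T *m blkA A j) <= muB A.
Proof.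
move=> ij; rewrite /muB (bigD1 i) //= le_max; apply/orP; left.
by rewrite (bigD1 j) //= le_max lexx.
Qed.

Lemma dot_blocks_le (i j : 'I_l) a b : i != j ->
  `|dot (blkA A i *m a) (blkA A j *m b)| <= muB A * norm2 a * norm2 b.
Proof.
have ordered (i' j' : 'I_l) a' b' : (i' < j')%N ->
    `|dot (blkA A i' *m a') (blkA A j' *m b')| <= muB A * norm2 a' * norm2 b'.
  move=> ij; rewrite dot_mulmxl mulmxA; apply: le_trans (ler_dot_norm2 _ _) _.
  rewrite [leRHS]mulrAC [leRHS]mulrC; apply: ler_wpM2l; first exact: norm2_ge0.
  apply: le_trans (norm2_mulmx_le _ _) _.
  by apply: ler_wpM2r; [exact: norm2_ge0 | exact: specnorm_le_muB].
case: (ltngtP i j) => [ij _|ji _|/val_inj ->]; [exact: ordered | | by rewrite eqxx].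
by rewrite dotC mulrAC; apply: ordered.
Qed.

Lemma dot_block (i : 'I_l) a b : dot (blkA A i *m a) (blkA A i *m b) = dot a b.
Proof. by rewrite dot_mulmxl mulmxA orthonormal_blocks mul1mx. Qed.

Lemma coherence_dot y w :
  `|dot (A *m y) (A *m w) - dot y w|
    <= muB A * (norm21 y * norm21 w - \sum_i norm2 (blk y i) * norm2 (blk w i)).
Proof.
have off_diag (F : 'I_l -> 'I_l -> R) :
    \sum_i \sum_j F i j - \sum_i F i i = \sum_i \sum_(j | j != i) F i j.
  by rewrite -sumrB; apply: eq_bigr => i _; rewrite (bigD1 i) //= addrAC subrr add0r.
have -> : dot (A *m y) (A *m w) - dot y w =
    \sum_i \sum_(j | j != i) dot (blkA A i *m blk y i) (blkA A j *m blk w j).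
  rewrite -off_diag !mul_blk dot_suml dot_blk; congr (_ - _).
    by apply: eq_bigr => i _; rewrite dot_sumr.
  by apply: eq_bigr => i _; rewrite dot_block.
have -> : norm21 y * norm21 w - \sum_i norm2 (blk y i) * norm2 (blk w i) =
    \sum_i \sum_(j | j != i) norm2 (blk y i) * norm2 (blk w j).
  rewrite -off_diag /norm21 mulr_suml; congr (_ - _).
  by apply: eq_bigr => i _; rewrite mulr_sumr.
rewrite mulr_sumr.
apply: le_trans (ler_norm_sum _ _ _) _; apply: ler_sum => i _.
rewrite mulr_sumr; apply: le_trans (ler_norm_sum _ _ _) _.
apply: ler_sum => j ji; rewrite mulrA; apply: dot_blocks_le.
by rewrite eq_sym.
Qed.

Lemma restricted_isometry k y : (norm20 y <= k)%N ->
  `|norm2 (A *m y) ^+ 2 - norm2 y ^+ 2| <= (k%:R - 1) * muB A * norm2 y ^+ 2.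
Proof.
move=> supp_k.
have norm21_sqr : norm21 y ^+ 2 <= k%:R * norm2 y ^+ 2.
  apply: le_trans (_ : _ <= (Num.sqrt k%:R * norm2 y) ^+ 2) _.
    by rewrite ler_sqr ?nnegrE ?mulr_ge0 ?sqrtr_ge0 ?norm21_ge0 ?norm2_ge0 ?norm21_le_norm2.
  by rewrite exprMn sqr_sqrtr ?ler0n.
have diag : \sum_i norm2 (blk y i) * norm2 (blk y i) = norm2 y ^+ 2.
  by rewrite norm2_blk; apply: eq_bigr => i _; rewrite expr2.
have := coherence_dot y y; rewrite diag -!norm2_sqr -expr2 => /le_trans; apply.
rewrite [leRHS]mulrAC [leRHS]mulrC; apply: ler_wpM2l; [exact: muB_ge0 | lra].
Qed.

Lemma coherence_robust_nsp k a c :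
  0 <= a -> (k%:R - 1) * muB A <= a -> a < 1 -> muB A <= c ->
  robust_nsp k A (Num.sqrt (1 + a) / (1 - a)) (Num.sqrt k%:R * c / (1 - a)).
Proof.
move=> a0 ka a1 muc h S cardS.
set y := restrict S h; set w := restrict (~: S) h.
have supp_y : (norm20 y <= k)%N := leq_trans (norm20_restrict S h) cardS.
have [lo hi] : (1 - a) * norm2 y ^+ 2 <= norm2 (A *m y) ^+ 2 /\
               norm2 (A *m y) ^+ 2 <= (1 + a) * norm2 y ^+ 2.
  have := ler_wpM2r (sqr_ge0 (norm2 y)) ka.
  by move: (restricted_isometry supp_y); rewrite ler_norml => /andP[]; split; lra.
have Ay_le : norm2 (A *m y) <= Num.sqrt (1 + a) * norm2 y.
  rewrite -ler_sqr ?nnegrE ?mulr_ge0 ?sqrtr_ge0 ?norm2_ge0 //.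
  by rewrite exprMn [Num.sqrt (1 + a) ^+ 2]sqr_sqrtr; lra.
have y21 := norm21_le_norm2 supp_y.
have cross : `|dot (A *m y) (A *m w)| <= c * norm21 y * norm21 w.
  have disj_dot : dot y w = 0.
    by rewrite dot_restrict big1 // => i iS; rewrite blk_restrict inE iS dot0r.
  have disj_blk : \sum_i norm2 (blk y i) * norm2 (blk w i) = 0.
    apply: big1 => i _; rewrite !blk_restrict inE.
    by case: (i \in S); rewrite norm2_0 ?mul0r ?mulr0.
  have := coherence_dot y w; rewrite disj_dot disj_blk !subr0 => /le_trans; apply.
  by rewrite -mulrA ler_wpM2r ?mulr_ge0 ?norm21_ge0.
have c0 : 0 <= c := le_trans muB_ge0 muc.
have gram_le : (1 - a) * norm2 y ^+ 2 <=
    norm2 y * (Num.sqrt (1 + a) * norm2 (A *m h) + Num.sqrt k%:R * c * norm21 w).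
  have split_Ah : A *m h = A *m y + A *m w by rewrite -mulmxDr restrict_split.
  have Ay_sqr : norm2 (A *m y) ^+ 2 = dot (A *m y) (A *m h) - dot (A *m y) (A *m w).
    by rewrite split_Ah dotDr addrK norm2_sqr.
  have dot_Ah : dot (A *m y) (A *m h) <= Num.sqrt (1 + a) * norm2 y * norm2 (A *m h).
    exact: le_trans (dot_le_norm2 _ _) (ler_wpM2r (norm2_ge0 _) Ay_le).
  have dot_Aw : - dot (A *m y) (A *m w) <= Num.sqrt k%:R * c * norm2 y * norm21 w.
    apply: le_trans (ler_norm _) _; rewrite normrN; apply: le_trans cross _.
    apply: ler_wpM2r; first exact: norm21_ge0.
    by rewrite mulrAC [leRHS]mulrC ler_wpM2l ?c0.
  lra.
apply: le_trans (ler_div_of_sqr_le _ _ gram_le) _; last lra.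
  by rewrite subr_gt0.
by rewrite addr_ge0 ?mulr_ge0 ?sqrtr_ge0 ?norm2_ge0 ?norm21_ge0.
Qed.

End Coherence.

Section RobustNSP.
Variables (R : realType) (m l d k : nat) (A : 'M[R]_(m, l * d)) (beta1 beta2 : R).
Hypotheses (k_gt0 : (0 < k)%N) (beta2_ge0 : 0 <= beta2).
Hypothesis nsp : robust_nsp k A beta1 beta2.

Lemma robust_nsp_norm2_le h (T : {set 'I_l}) : (#|T| <= k)%N ->
  norm2 h <= (2 + Num.sqrt k%:R * beta2) * beta1 * norm2 (A *m h)
             + ((2 + Num.sqrt k%:R * beta2) * beta2 + (Num.sqrt k%:R)^-1)
               * norm21 (restrict (~: T) h).
Proof.
move=> cardT; set sk := Num.sqrt k%:R; set Q := norm21 (restrict (~: T) h).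
have sk0 : 0 < sk by rewrite sqrtr_gt0 ltr0n.
have [S cardS tail] := exists_small_tail (restrict (~: T) h) k_gt0.
have tri : norm2 h <= norm2 (restrict T h) + norm2 (restrict (S :&: ~: T) h)
                     + norm2 (restrict (~: S) (restrict (~: T) h)).
  rewrite -restrictI -{1}(restrict_split T h) -{1}(restrict_split S (restrict (~: T) h)).
  by rewrite addrA; apply: le_trans (norm2D _ _) _; rewrite lerD2r norm2D.
have hT : norm2 (restrict T h) <= beta1 * norm2 (A *m h) + beta2 * Q := nsp h cardT.
have hST := nsp h (leq_trans (subset_leq_card (subsetIl S (~: T))) cardS).
have h21 : norm21 h <= sk * norm2 (restrict T h) + Q.
  rewrite (norm21_split T) lerD2r.
  exact/norm21_le_norm2/(leq_trans (norm20_restrict _ _) cardT).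
have := ler_wpM2l beta2_ge0 (le_trans (norm21_restrict_le (~: (S :&: ~: T)) h) h21).
have := ler_wpM2l (addr_ge0 ler01 (mulr_ge0 (ltW sk0) beta2_ge0)) hT.
move: tail; rewrite -/Q -/sk mulrC => tail.
lra.
Qed.

End RobustNSP.

Section BlockLasso.
Variables (R : realType) (m l d : nat) (A : 'M[R]_(m, l * d)) (lam : R).
Variables (b : 'cV[R]_m) (xs : 'cV[R]_(l * d)).
Hypothesis lam_gt0 : 0 < lam.
Hypothesis xs_opt : forall y, lasso_obj lam A b xs <= lasso_obj lam A b y.

Lemma lasso_perturb v t :
  t * dot v (A^T *m (b - A *m xs))
    <= lam * (norm21 (xs + t *: v) - norm21 xs) + t ^+ 2 / 2 * norm2 (A *m v) ^+ 2.
Proof.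
have := xs_opt (xs + t *: v); rewrite /lasso_obj.
have -> : b - A *m (xs + t *: v) = (b - A *m xs) + (- t) *: (A *m v).
  by rewrite mulmxDr -scalemxAr scaleNr opprD addrA.
rewrite [norm2 (_ + _ *: _) ^+ 2]norm2_sqrD norm2Z exprMn real_normK ?num_real //.
rewrite sqrrN dotZr (dotC (b - _)) dot_mulmxl => opt.
have half : lam * (2 * lam)^-1 = 2^-1 by rewrite invfM mulrCA mulfV ?gt_eqF // mulr1.
have := ler_wpM2l (ltW lam_gt0) opt; rewrite !mulrDr !mulrA half.
lra.
Qed.

Lemma lasso_dual_blk_le i : norm2 (blk (A^T *m (b - A *m xs)) i) <= lam.
Proof.
set g := A^T *m _; set v := restrict [set i] g; set n := norm2 (blk g i).
have gv : dot v g = n ^+ 2 by rewrite dot_restrict big_set1 norm2_sqr.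
have v21 : norm21 v = n by rewrite norm21_restrict big_set1.
suff : n ^+ 2 <= lam * n.
  by rewrite mulrC -[n ^+ 2]mul1r => /(ler_div_of_sqr_le ltr01 (ltW lam_gt0)); rewrite divr1.
apply: (@ler_of_le_add_small_mul _ _ _ (norm2 (A *m v) ^+ 2 / 2)) => t /andP[t0 _].
rewrite -(ler_pM2l t0) -gv; apply: le_trans (lasso_perturb v t) _.
have : norm21 (xs + t *: v) - norm21 xs <= t * n.
  rewrite lerBlDr addrC; apply: le_trans (norm21D _ _) _.
  by rewrite norm21Z gtr0_norm ?v21.
move/(ler_wpM2l (ltW lam_gt0)); lra.
Qed.

Lemma lasso_dual_xs : lam * norm21 xs <= dot xs (A^T *m (b - A *m xs)).
Proof.
apply: (@ler_of_le_add_small_mul _ _ _ (norm2 (A *m xs) ^+ 2 / 2)) => t /andP[t0 t1].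
have := lasso_perturb (- xs) t.
have -> : xs + t *: - xs = (1 - t) *: xs by rewrite scalerN scalerBl scale1r.
rewrite norm21Z ger0_norm ?subr_ge0 // dotNl mulmxN norm2N => perturb.
rewrite -(ler_pM2l t0).
lra.
Qed.

Lemma lasso_basic_inequality x z eps : b = A *m x + z -> norm2 z <= eps ->
  norm2 (A *m (xs - x)) ^+ 2
    <= eps * norm2 (A *m (xs - x)) + lam * (norm21 x - norm21 xs).
Proof.
move=> bE z_le; have dual := lasso_dual_blk_le; have dual_xs := lasso_dual_xs.
have r_eq : b - A *m xs = z - A *m (xs - x).
  by rewrite bE mulmxBr; apply/matrixP => i j; rewrite !mxE; ring.
set g := A^T *m (b - A *m xs) in dual dual_xs *; set h := xs - x.
have residual : norm2 (A *m h) ^+ 2 = dot (A *m h) z - dot h g.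
  by rewrite /g r_eq -dot_mulmxl dotBr norm2_sqr opprB addrC subrK.
have xg : dot x g <= lam * norm21 x.
  rewrite dot_blk /norm21 mulr_sumr; apply: ler_sum => i _.
  by apply: le_trans (dot_le_norm2 _ _) _; rewrite mulrC ler_wpM2r ?norm2_ge0.
have zg : dot (A *m h) z <= eps * norm2 (A *m h).
  by apply: le_trans (dot_le_norm2 _ _) _; rewrite mulrC ler_wpM2r ?norm2_ge0.
have : dot h g = dot xs g - dot x g by rewrite dotBl.
lra.
Qed.

End BlockLasso.

Section LassoError.
Variables (R : realType) (m l d k : nat) (A : 'M[R]_(m, l * d)) (beta1 beta2 lam eps : R).
Variables (x xs xk : 'cV[R]_(l * d)) (z : 'cV[R]_m).
Hypothesis nsp : robust_nsp k A beta1 beta2.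
Hypotheses (lam_gt0 : 0 < lam) (z_le : norm2 z <= eps) (xk_sparse : (norm20 xk <= k)%N).
Hypothesis xs_opt :
  forall y, lasso_obj lam A (A *m x + z) xs <= lasso_obj lam A (A *m x + z) y.

Lemma lasso_key_inequality (h := xs - x) (T := bsupp xk) :
  norm2 (A *m h) ^+ 2 <=
    (Num.sqrt k%:R * beta1 * lam + eps) * norm2 (A *m h)
    - lam * (1 - Num.sqrt k%:R * beta2) * norm21 (restrict (~: T) h)
    + 2 * lam * norm21 (x - xk).
Proof.
have basic := lasso_basic_inequality lam_gt0 xs_opt (erefl _) z_le.
have cone := ler_wpM2l (ltW lam_gt0) (norm21_cone x xs xk).
have cardT : (#|T| <= k)%N by rewrite -norm20E.
have hT21 : norm21 (restrict T h) <= Num.sqrt k%:R * norm2 (restrict T h).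
  exact/norm21_le_norm2/(leq_trans (norm20_restrict _ _) cardT).
have := ler_wpM2l (ltW lam_gt0)
  (le_trans hT21 (ler_wpM2l (sqrtr_ge0 _) (nsp h cardT))).
rewrite -/h -/T in basic cone *; lra.
Qed.

End LassoError.

Lemma lasso_error_algebra (R : realFieldType) (sk b1 b2 lam eps sig s Q nh : R) :
  let t := sk * b2 in let c := sk * b1 * lam + eps in
  0 < sk -> 0 < b1 -> 0 <= b2 -> t < 1 -> 0 < lam -> 0 <= eps -> 0 <= sig -> 0 <= Q ->
  s ^+ 2 <= c * s - lam * (1 - t) * Q + 2 * lam * sig ->
  nh <= (2 + t) * b1 * s + ((2 + t) * b2 + sk^-1) * Q ->
  s <= 2 * lam / c * sig + 2 * c /\
  nh <= (2 * sk * b1 * (sk ^+ 2 * b2 ^+ 2 + 3 * sk * b2 + 3) * lam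
         + 2 * (2 * sk ^+ 2 * b2 ^+ 2 + 4 * sk * b2 + 1) * eps) / (sk * (1 - sk * b2) * c) * sig
        + (sk * b1 * (5 + 2 * sk * b2) * lam + (2 * sk ^+ 2 * b2 ^+ 2 + 4 * sk * b2 + 1) * eps)
          * c / (sk * (1 - sk * b2) * lam).
Proof.
move=> t c sk0 b10 b20 t1 lam0 eps0 sig0 Q0 key l2.
have t0 : 0 <= t := mulr_ge0 (ltW sk0) b20.
have p0 : 0 < sk * b1 * lam by rewrite !mulr_gt0.
have c0 : 0 < c by rewrite /c; lra.
have lam_t : 0 < lam * (1 - t) by rewrite mulr_gt0 // subr_gt0.
have e0 : 0 <= 2 * lam * sig by rewrite !mulr_ge0 // ltW.
have [cs qb] := quadratic_bounds c0 (mulr_ge0 (ltW lam_t) Q0) e0 key.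
have s_le : s <= c + 2 * lam * sig / c.
  by rewrite -(ler_pM2l c0) mulrDr [c * (_ / c)]mulrC divfK ?gt_eqF // -expr2.
split; first lra.
have Q_le : Q <= (c ^+ 2 / 4 + 2 * lam * sig) / (lam * (1 - t)).
  by rewrite ler_pdivlMr // mulrC.
have mid : nh <= (2 + t) * b1 * (c + 2 * lam * sig / c)
                 + ((2 + t) * b2 + sk^-1) * ((c ^+ 2 / 4 + 2 * lam * sig) / (lam * (1 - t))).
  apply: le_trans l2 _; apply: lerD; apply: ler_wpM2l => //.
    by apply: mulr_ge0; [lra | exact: ltW].
  by apply: addr_ge0; [apply: mulr_ge0; lra | rewrite invr_ge0 ltW].
apply: le_trans mid _.
set lhs := (X in X <= _); set rhs := (X in _ <= X).
have -> : rhs = lhs + 2 * sig * (t ^+ 2 + 2 * t) / (sk * (1 - t))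
    + c * (sk * b1 * lam * (11 + 10 * t + 3 * t ^+ 2) + eps * (7 * t ^+ 2 + 14 * t + 3))
      / (4 * sk * lam * (1 - t)).
  by rewrite /rhs /lhs /c /t; field; rewrite !gt_eqF // subr_gt0.
have t20 : 0 <= t ^+ 2 := sqr_ge0 t.
have omt : 0 <= 1 - t by rewrite subr_ge0 ltW.
rewrite -addrA lerDl; apply: addr_ge0; apply: divr_ge0.
- by rewrite !mulr_ge0 //; lra.
- exact: mulr_ge0 (ltW sk0) omt.
- apply: mulr_ge0; first exact: ltW.
  by apply: addr_ge0; apply: mulr_ge0; rewrite ?(ltW p0) //; lra.
- by rewrite !mulr_ge0 // ltW.
Qed.

Lemma muB_condition (R : realType) (k d : nat) (mu : R) :
  (0 < k)%N -> (0 < d)%N -> 0 <= mu -> mu < ((2 * k - 1) * d)%:R^-1 ->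
  let a := (k.-1 * d)%:R * mu in
  [/\ 0 <= a, (k%:R - 1) * mu <= a, a < 1, mu <= d%:R * mu
    & Num.sqrt k%:R * (Num.sqrt k%:R * d%:R * mu / (1 - a)) < 1].
Proof.
move=> k0 d0 mu0 small a.
have d1 : 1 <= d%:R :> R by rewrite ler1n.
have kd : ((2 * k - 1) * d)%:R = (k.-1 * d)%:R + k%:R * d%:R :> R.
  by rewrite -natrM -natrD -subn1; congr _%:R; nia.
have kdmu : 0 <= k%:R * d%:R * mu :> R by rewrite !mulr_ge0.
have total : a + k%:R * d%:R * mu < 1.
  have X0 : 0 < ((2 * k - 1) * d)%:R :> R by rewrite ltr0n muln_gt0 d0 andbT; lia.
  by move: small; rewrite -(ltr_pM2l X0) mulfV ?gt_eqF // kd mulrDl.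
have a0 : 0 <= a by rewrite mulr_ge0 ?ler0n.
have ka : (k%:R - 1) * mu <= a.
  have -> : k%:R - 1 = k.-1%:R :> R by rewrite -subn1 natrB.
  by rewrite /a natrM -mulrA ler_wpM2l ?ler0n // -[X in X <= _]mul1r ler_wpM2r.
have t_lt1 : Num.sqrt k%:R * (Num.sqrt k%:R * d%:R * mu / (1 - a)) < 1.
  rewrite !mulrA -expr2 sqr_sqrtr ?ler0n // ltr_pdivrMr ?subr_gt0 ?mul1r; lra.
split => //; first lra.
by rewrite -[X in X <= _]mul1r ler_wpM2r.
Qed.

Theorem theorem3 (R : realType) (m l d k : nat)
  (A : 'M[R]_(m, l * d)) (x : 'cV[R]_(l * d)) (eps : R) (z : 'cV[R]_m)
  (lam : R) (xs xk : 'cV[R]_(l * d)) :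
  (0 < l)%N -> (0 < d)%N -> (2 <= k)%N ->
  (forall i : 'I_l, (blkA A i)^T *m blkA A i = 1%:M) ->
  muB A < ((2 * k - 1) * d)%:R^-1 ->
  0 <= eps -> norm2 z <= eps ->
  0 < lam ->
  (forall y : 'cV[R]_(l * d),
     lasso_obj lam A (A *m x + z) xs <= lasso_obj lam A (A *m x + z) y) ->
  best_k_block_approx k x xk ->
  let mu := muB A in
  let sk := Num.sqrt (k%:R : R) in
  let beta1 := Num.sqrt (1 + (k.-1 * d)%:R * mu) / (1 - (k.-1 * d)%:R * mu) in
  let beta2 := sk * d%:R * mu / (1 - (k.-1 * d)%:R * mu) in
  let fk := fun t : R => k%:R * t ^+ 2 + 3 * sk * t + 3 in
  let gk := fun t : R => 2 * k%:R * t ^+ 2 + 4 * sk * t + 1 in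
  let sigma := norm21 (x - xk) in
  norm2 (A *m (xs - x)) <=
    2 * lam / (sk * beta1 * lam + eps) * sigma + 2 * (sk * beta1 * lam + eps)
  /\
  norm2 (xs - x) <=
    (2 * sk * beta1 * fk beta2 * lam + 2 * gk beta2 * eps)
      / (sk * (1 - sk * beta2) * (sk * beta1 * lam + eps)) * sigma
    + (sk * beta1 * (5 + 2 * sk * beta2) * lam + gk beta2 * eps)
      * (sk * beta1 * lam + eps) / (sk * (1 - sk * beta2) * lam).
Proof.
move=> _ d0 k2 orth small eps0 z_le lam0 opt [xk_sparse _] mu sk beta1 beta2 fk gk sigma.
have k0 : (0 < k)%N by apply: leq_trans k2.
have := muB_condition k0 d0 (muB_ge0 A) small.
rewrite -/mu -/sk -/beta2 => -[a0 ka a1 muc t_lt1].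
have beta1_gt0 : 0 < beta1 by rewrite divr_gt0 ?subr_gt0 // sqrtr_gt0; lra.
have beta2_ge0 : 0 <= beta2.
  by rewrite divr_ge0 ?mulr_ge0 ?sqrtr_ge0 ?ler0n ?muB_ge0 // subr_ge0 ltW.
have nsp : robust_nsp k A beta1 beta2.
  by rewrite /beta2 -[sk * d%:R * mu]mulrA; exact: coherence_robust_nsp.
have T_sparse : (#|bsupp xk| <= k)%N by rewrite -norm20E.
rewrite /fk /gk -[k%:R](sqr_sqrtr (ler0n R k)) -/sk.
apply: (lasso_error_algebra (Q := norm21 (restrict (~: bsupp xk) (xs - x)))) => //.
- by rewrite sqrtr_gt0 ltr0n.
- exact: norm21_ge0.
- exact: norm21_ge0.
- exact: (lasso_key_inequality nsp lam0 z_le xk_sparse opt).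
- exact: robust_nsp_norm2_le.
Qed.
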